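(* Let $\kappa>0$, $u_0>0$, and consider the sessile liquid channel with parameter $u_0$ and contact angle $\gamma$ resting on $\Pi$, with volume $\mathcal V(\gamma)$. Let $a=r(\gamma)$ and $R=r(\pi/2)$. If $0<\gamma\le\pi/2$, then $$\mathcal V(\gamma)<\frac{a^2}{\sin^2\gamma}(\gamma-\sin\gamma\cos\gamma).$$ If $\pi/2\le\gamma\le\pi$, then $$\mathcal V(\gamma)<R^2(\gamma-\sin\gamma\cos\gamma).$$
   Context: For $u_0>0$, $(r(\psi),u(\psi))$, $\psi\in[0,\pi]$, is the solution of $\frac{dr}{d\psi}=\frac{\cos\psi}{\kappa u}$, $\frac{du}{d\psi}=\frac{\sin\psi}{\kappa u}$, $r(0)=0$, $u(0)=u_0$ (profile of a $\kappa$-cylindrical surface parametrized by inclination angle $\psi$). The channel with contact angle $\gamma$ is the arc $\psi\in[0,\gamma]$ reflected in $r\mapsto-r$, resting on the line $u=u(\gamma)$; $2R$ is its maximal width (where it is vertical). Its volume per unit length is $\mathcal V(\gamma)=2\big(r(\gamma)u(\gamma)-\frac{\sin\gamma}\kappa\big)$. *)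

From Stdlib Require Import Reals.
From Coquelicot Require Import Coquelicot.
Open Scope R_scope.

Definition is_profile (kappa u0 : R) (r u : R -> R) : Prop :=
  r 0 = 0 /\ u 0 = u0 /\
  (forall psi, 0 <= psi <= PI ->
     is_derive r psi (cos psi / (kappa * u psi)) /\
     is_derive u psi (sin psi / (kappa * u psi))).

Definition channel_volume (kappa : R) (r u : R -> R) (gamma : R) : R :=
  2 * (r gamma * u gamma - sin gamma / kappa).

From Stdlib Require Import Reals Lra Ranalysis5.
From Coquelicot Require Import Coquelicot.
Open Scope R_scope.

(* For gamma <= PI/2 compare the channel with the circular segment having the same
   half-width a = r(gamma) and contact angle gamma, whose area is a^2 phi(gamma) with
   phi(t) = (t - sin t cos t) / sin^2 t.  Along the profile V' = 2 r sin / (kappa u), and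
   since the radius of curvature 1/(kappa u) of the profile decreases,
   r(t) > sin t / (kappa u(t)); hence the difference r^2 phi - V has positive derivative
   on (0, PI/2].  It is bounded below by -V, which tends to 0 at 0, so it is positive.

   For gamma >= PI/2, past its widest point the profile stays inside the disc of radius
   R = r(PI/2) centred at (0, u(PI/2)).  Hence V grows no faster than the area of the slab
   of that disc swept between heights u(PI/2) and u, and u(gamma) - u(PI/2) is at most the
   height of the point of the circle with inclination gamma.  This gives
   V(gamma) <= V(PI/2) + R^2 (gamma - sin gamma cos gamma - PI/2), and V(PI/2) < R^2 PI/2
   by the first case. *)

(* [auto_derive] leaves eta-expanded [Derive (fun y : R => f y) x] terms. *)
Ltac rewrite_Derive H :=
  match type of H with
  | is_derive ?f ?x ?l => rewrite (is_derive_unique (fun y : R => f y) x l H)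
  end.

Lemma is_derive_continuity_pt f x l : is_derive f x l -> continuity_pt f x.
Proof.
  intros Hf. apply continuity_pt_filterlim, (ex_derive_continuous (V := R_NormedModule)).
  now exists l.
Qed.

Lemma derive_nonneg_le f df a b :
  a <= b -> (forall x, a <= x <= b -> is_derive f x (df x)) ->
  (forall x, a <= x <= b -> 0 <= df x) -> f a <= f b.
Proof.
  intros Hab Hd Hpos.
  destruct (MVT_gen f a b df) as [c [Hc Hmvt]].
  - intros x Hx. apply Hd. rewrite Rmin_left, Rmax_right in Hx; lra.
  - intros x Hx. apply (is_derive_continuity_pt _ _ (df x)), Hd.
    rewrite Rmin_left, Rmax_right in Hx; lra.
  - rewrite Rmin_left, Rmax_right in Hc by lra.
    specialize (Hpos c Hc). nra.
Qed.

Lemma derive_nonpos_ge f df a b :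
  a <= b -> (forall x, a <= x <= b -> is_derive f x (df x)) ->
  (forall x, a <= x <= b -> df x <= 0) -> f b <= f a.
Proof.
  intros Hab Hd Hneg.
  enough (- f a <= - f b) by lra.
  apply (derive_nonneg_le (fun x => - f x) (fun x => - df x)); [lra | | ].
  - intros x Hx. apply (is_derive_opp f x (df x)), Hd, Hx.
  - intros x Hx. specialize (Hneg x Hx). lra.
Qed.

Lemma derive_zero_eq f a b :
  a <= b -> (forall x, a <= x <= b -> is_derive f x 0) -> f a = f b.
Proof.
  intros Hab Hd. apply Rle_antisym.
  - apply (derive_nonneg_le f (fun _ => 0)); auto; intros; lra.
  - apply (derive_nonpos_ge f (fun _ => 0)); auto; intros; lra.
Qed.

Lemma derive_pos_interior_lt f df a b :
  a < b -> (forall x, a <= x <= b -> is_derive f x (df x)) ->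
  (forall x, a <= x <= b -> 0 <= df x) ->
  (forall x, a < x < b -> 0 < df x) -> f a < f b.
Proof.
  intros Hab Hd Hnonneg Hpos.
  set (m1 := (2 * a + b) / 3). set (m2 := (a + 2 * b) / 3).
  assert (Hm1 : f a <= f m1).
  { apply (derive_nonneg_le f df); unfold m1 in *; try lra;
      intros x Hx; [apply Hd | apply Hnonneg]; lra. }
  assert (Hm2 : f m2 <= f b).
  { apply (derive_nonneg_le f df); unfold m2 in *; try lra;
      intros x Hx; [apply Hd | apply Hnonneg]; lra. }
  assert (Hm12 : f m1 < f m2).
  { apply (incr_function_le f m1 m2 df); simpl; unfold m1, m2 in *; try lra;
      intros x Hx1 Hx2; [apply Hd | apply Hpos]; lra. }
  lra.
Qed.

Lemma is_derive_sub_sin_mul_cos t :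
  is_derive (fun t => t - sin t * cos t) t (2 * sin t ^ 2).
Proof.
  auto_derive; [easy |].
  pose proof (sin2_cos2 t) as Hsc. rewrite !Rsqr_pow2 in Hsc. nra.
Qed.

Lemma sin_sub_mul_cos_pos x : 0 < x <= PI / 2 -> 0 < sin x - x * cos x.
Proof.
  intros Hx. pose proof PI_RGT_0.
  replace 0 with (sin 0 - 0 * cos 0) at 1 by (rewrite sin_0; ring).
  apply (derive_pos_interior_lt (fun t => sin t - t * cos t) (fun t => t * sin t));
    [lra | | |].
  - intros t _. auto_derive; [easy | ring].
  - intros t Ht. pose proof (sin_ge_0 t ltac:(lra) ltac:(lra)). nra.
  - intros t Ht. pose proof (sin_gt_0 t ltac:(lra) ltac:(lra)). nra.
Qed.

Lemma sub_sin_mul_cos_nonneg x : 0 <= x -> 0 <= x - sin x * cos x.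
Proof.
  intros Hx. destruct (Req_dec x 0) as [-> | Hx0]; [rewrite sin_0; lra |].
  pose proof (sin_lt_x (2 * x) ltac:(lra)) as Hsin. rewrite sin_2a in Hsin. lra.
Qed.

(* [a ^ 2 * segment_ratio g] is the area of the circular segment whose chord has
   half-length [a] and meets the arc at angle [g]. *)
Definition segment_ratio (t : R) : R := (t - sin t * cos t) / sin t ^ 2.

Lemma is_derive_segment_ratio t : sin t <> 0 ->
  is_derive segment_ratio t (2 * (sin t - cos t * segment_ratio t) / sin t).
Proof.
  intros Hs. set (N := fun t => t - sin t * cos t).
  assert (HN : is_derive N t (2 * sin t ^ 2)) by apply is_derive_sub_sin_mul_cos.
  change segment_ratio with (fun t => N t / sin t ^ 2).
  auto_derive.
  - repeat split; [now exists (2 * sin t ^ 2) |].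
    rewrite Rmult_1_r. now apply Rmult_integral_contrapositive.
  - rewrite_Derive HN. unfold N. field. exact Hs.
Qed.

Lemma segment_ratio_nonneg t : 0 < t < PI -> 0 <= segment_ratio t.
Proof.
  intros Ht. pose proof (sin_gt_0 t ltac:(lra) ltac:(lra)).
  apply Rdiv_le_0_compat; [apply sub_sin_mul_cos_nonneg; lra | nra].
Qed.

Lemma segment_ratio_slope_pos t : 0 < t <= PI / 2 -> 0 < sin t - cos t * segment_ratio t.
Proof.
  intros Ht. pose proof PI_RGT_0.
  pose proof (sin_gt_0 t ltac:(lra) ltac:(lra)) as Hs.
  pose proof (sin2_cos2 t) as Hsc. rewrite !Rsqr_pow2 in Hsc.
  assert (E : (sin t - cos t * segment_ratio t) * sin t ^ 2
              = sin t * (sin t ^ 2 + cos t ^ 2) - t * cos t)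
    by (unfold segment_ratio; field; lra).
  rewrite Hsc, Rmult_1_r in E.
  pose proof (sin_sub_mul_cos_pos t Ht).
  apply (Rmult_lt_reg_r (sin t ^ 2)); nra.
Qed.

Lemma increasing_pos_of_vanishing_lower_bound (G V : R -> R) b :
  continuity_pt V 0 -> V 0 = 0 ->
  (forall x y, 0 < x -> x < y -> y <= b -> G x < G y) ->
  (forall x, 0 < x <= b -> - V x <= G x) ->
  forall x, 0 < x <= b -> 0 < G x.
Proof.
  intros HV HV0 Hincr Hlow.
  assert (Hnonneg : forall x, 0 < x <= b -> 0 <= G x).
  { intros x Hx. apply Rnot_lt_le. intros Hneg.
    destruct (HV (- G x) ltac:(lra)) as [d [Hd Hnear]].
    set (e := Rmin (d / 2) (x / 2)).
    assert (He : 0 < e <= x / 2 /\ e <= d / 2).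
    { unfold e; repeat split; [apply Rmin_glb_lt | apply Rmin_r | apply Rmin_l]; lra. }
    assert (HVe : Rabs (V e) < - G x).
    { rewrite <- (Rminus_0_r (V e)), <- HV0.
      apply (Hnear e). split; [split; [exact I | lra] |].
      simpl; unfold R_dist. rewrite Rminus_0_r, Rabs_pos_eq; lra. }
    pose proof (Rle_abs (V e)). pose proof (Hlow e ltac:(lra)).
    pose proof (Hincr e x ltac:(lra) ltac:(lra) ltac:(lra)).
    lra. }
  intros x Hx. apply (Rle_lt_trans _ (G (x / 2))); [apply Hnonneg | apply Hincr]; lra.
Qed.

Definition disc_slab_area (rho h : R) : R := 2 * RInt (fun t => sqrt (rho ^ 2 - t ^ 2)) 0 h.

Lemma is_derive_disc_slab_area rho h :
  is_derive (disc_slab_area rho) h (2 * sqrt (rho ^ 2 - h ^ 2)).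
Proof.
  set (f := fun t => sqrt (rho ^ 2 - t ^ 2)).
  assert (Hf : forall t, continuous f t).
  { intros t. apply (continuous_comp (fun t => rho ^ 2 - t ^ 2) sqrt).
    - apply (ex_derive_continuous (V := R_NormedModule)). auto_derive. easy.
    - apply continuous_sqrt. }
  apply (is_derive_scal (fun h => RInt f 0 h) h 2 (f h)).
  apply (is_derive_RInt _ _ 0); [| apply Hf].
  apply filter_forall. intros b.
  apply (RInt_correct (V := R_CompleteNormedModule)), ex_RInt_continuous.
  intros t _. apply Hf.
Qed.

Lemma disc_slab_area_0 rho : disc_slab_area rho 0 = 0.
Proof. unfold disc_slab_area. rewrite RInt_point. unfold zero; simpl. ring. Qed.

Lemma disc_slab_area_le rho h h' : h <= h' -> disc_slab_area rho h <= disc_slab_area rho h'.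
Proof.
  intros Hh. apply (derive_nonneg_le _ (fun h => 2 * sqrt (rho ^ 2 - h ^ 2))); [exact Hh | |].
  - intros x _. apply is_derive_disc_slab_area.
  - intros x _. pose proof (sqrt_pos (rho ^ 2 - x ^ 2)). lra.
Qed.

Lemma disc_slab_area_neg_cos rho p : 0 <= rho -> 0 <= p <= PI ->
  disc_slab_area rho (- (rho * cos p)) = rho ^ 2 * (p - sin p * cos p - PI / 2).
Proof.
  intros Hrho Hp. pose proof PI_RGT_0.
  set (F := fun t => disc_slab_area rho (- (rho * cos t)) - rho ^ 2 * (t - sin t * cos t)).
  assert (HF : forall t, 0 <= t <= PI -> is_derive F t 0).
  { intros t Ht. pose proof (sin_ge_0 t ltac:(lra) ltac:(lra)).
    pose proof (sin2_cos2 t) as Hsc. rewrite !Rsqr_pow2 in Hsc.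
    pose proof (is_derive_disc_slab_area rho (- (rho * cos t))) as Hslab.
    assert (Hsqrt : sqrt (rho ^ 2 - (- (rho * cos t)) ^ 2) = rho * sin t).
    { replace (rho ^ 2 - (- (rho * cos t)) ^ 2) with ((rho * sin t) ^ 2) by nra.
      apply sqrt_pow2. nra. }
    rewrite Hsqrt in Hslab.
    unfold F. auto_derive; [now exists (2 * (rho * sin t)) |].
    rewrite_Derive Hslab. nra. }
  assert (HF_PI2 : F (PI / 2) = - (rho ^ 2 * (PI / 2))).
  { unfold F. rewrite sin_PI2, cos_PI2, Rmult_0_r, Ropp_0, disc_slab_area_0. ring. }
  enough (F p = F (PI / 2)) by (unfold F in *; lra).
  destruct (Rle_dec p (PI / 2)).
  - apply derive_zero_eq; [lra |]. intros t Ht. apply HF. lra.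
  - symmetry. apply derive_zero_eq; [lra |]. intros t Ht. apply HF. lra.
Qed.

Section Profile.

Variables (kappa u0 : R) (r u : R -> R).
Hypotheses (Hkappa : 0 < kappa) (Hu0 : 0 < u0) (Hprofile : is_profile kappa u0 r u).

Lemma profile_derive_r p : 0 <= p <= PI -> is_derive r p (cos p / (kappa * u p)).
Proof. intros Hp. destruct Hprofile as (_ & _ & Hd). exact (proj1 (Hd p Hp)). Qed.

Lemma profile_derive_u p : 0 <= p <= PI -> is_derive u p (sin p / (kappa * u p)).
Proof. intros Hp. destruct Hprofile as (_ & _ & Hd). exact (proj2 (Hd p Hp)). Qed.

Lemma profile_u_pos p : 0 <= p <= PI -> 0 < u p.
Proof.
  intros Hp. destruct Hprofile as (_ & Hu_0 & _).
  (* Where [u = 0] the division by [u] yields [0], so the derivative of [u ^ 2] is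
     [2 sin / kappa >= 0] or [0]. *)
  assert (Hsq : forall q, 0 <= q <= PI -> u0 ^ 2 <= u q ^ 2).
  { intros q Hq. rewrite <- Hu_0.
    apply (derive_nonneg_le (fun x => u x ^ 2)
             (fun x => 2 * u x * (sin x / (kappa * u x)))); [lra | |].
    - intros x Hx. pose proof (profile_derive_u x ltac:(lra)) as Hu.
      auto_derive; [eexists; exact Hu |].
      rewrite_Derive Hu. ring.
    - intros x Hx. destruct (Req_dec (u x) 0) as [E | E]; [rewrite E; lra |].
      replace (2 * u x * (sin x / (kappa * u x))) with (2 * sin x / kappa) by (field; lra).
      apply Rdiv_le_0_compat; [pose proof (sin_ge_0 x); lra | exact Hkappa]. }
  apply Rnot_le_lt. intros Hneg.
  pose proof (Hsq p Hp).
  assert (Hp0 : 0 < p) by (destruct (Req_dec p 0) as [-> |]; [rewrite Hu_0 in Hneg |]; lra).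
  destruct (IVT_interv (fun x => - u x) 0 p) as [z [Hz Hz0]]; [| lra | lra | nra |].
  - intros x Hx. apply continuity_pt_opp.
    apply (is_derive_continuity_pt _ _ _ (profile_derive_u x ltac:(lra))).
  - pose proof (Hsq z ltac:(lra)). nra.
Qed.

Lemma profile_u_lt x y : 0 <= x -> x < y -> y <= PI -> u x < u y.
Proof.
  intros Hx Hxy Hy.
  apply (derive_pos_interior_lt u (fun t => sin t / (kappa * u t))); [lra | | |].
  - intros t Ht. apply profile_derive_u. lra.
  - intros t Ht. pose proof (profile_u_pos t ltac:(lra)).
    apply Rdiv_le_0_compat; [apply sin_ge_0 | apply Rmult_lt_0_compat]; lra.
  - intros t Ht. pose proof (profile_u_pos t ltac:(lra)).
    apply Rdiv_lt_0_compat; [apply sin_gt_0 | apply Rmult_lt_0_compat]; lra.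
Qed.

Lemma profile_u_le x y : 0 <= x -> x <= y -> y <= PI -> u x <= u y.
Proof.
  intros Hx Hxy Hy. destruct (Req_dec x y) as [-> | Hne]; [lra |].
  apply Rlt_le, profile_u_lt; lra.
Qed.

Lemma profile_r_gt g : 0 < g <= PI / 2 -> sin g / (kappa * u g) < r g.
Proof.
  intros Hg. pose proof PI_RGT_0. destruct Hprofile as (Hr_0 & _ & _).
  pose proof (profile_u_pos g ltac:(lra)) as Hug.
  enough (r 0 - sin 0 / (kappa * u g) < r g - sin g / (kappa * u g))
    by (rewrite Hr_0, sin_0 in *; lra).
  apply (derive_pos_interior_lt (fun t => r t - sin t / (kappa * u g))
           (fun t => cos t * (/ (kappa * u t) - / (kappa * u g)))); [lra | | |].
  - intros t Ht. pose proof (profile_derive_r t ltac:(lra)) as Hr.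
    pose proof (profile_u_pos t ltac:(lra)).
    auto_derive; [eexists; exact Hr |].
    rewrite_Derive Hr. field. lra.
  - intros t Ht. pose proof (profile_u_pos t ltac:(lra)).
    pose proof (profile_u_le t g ltac:(lra) ltac:(lra) ltac:(lra)).
    apply Rmult_le_pos; [apply cos_ge_0; lra |].
    enough (/ (kappa * u g) <= / (kappa * u t)) by lra.
    apply Rinv_le_contravar; nra.
  - intros t Ht. pose proof (profile_u_pos t ltac:(lra)).
    pose proof (profile_u_lt t g ltac:(lra) ltac:(lra) ltac:(lra)).
    apply Rmult_lt_0_compat; [apply cos_gt_0; lra |].
    enough (/ (kappa * u g) < / (kappa * u t)) by lra.
    apply Rinv_lt_contravar; [apply Rmult_lt_0_compat | apply Rmult_lt_compat_l]; nra.
Qed.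

Lemma channel_volume_0 : channel_volume kappa r u 0 = 0.
Proof.
  destruct Hprofile as (Hr_0 & _ & _).
  unfold channel_volume. rewrite Hr_0, sin_0. field. lra.
Qed.

Lemma is_derive_channel_volume t : 0 <= t <= PI ->
  is_derive (channel_volume kappa r u) t (2 * r t * sin t / (kappa * u t)).
Proof.
  intros Ht. pose proof (profile_derive_r t Ht) as Hr.
  pose proof (profile_derive_u t Ht) as Hu. pose proof (profile_u_pos t Ht).
  unfold channel_volume. auto_derive.
  - repeat split; [eexists; exact Hr | eexists; exact Hu].
  - rewrite_Derive Hr. rewrite_Derive Hu. field. lra.
Qed.

Lemma segment_excess_increasing x y : 0 < x -> x < y -> y <= PI / 2 ->
  r x ^ 2 * segment_ratio x - channel_volume kappa r u x
  < r y ^ 2 * segment_ratio y - channel_volume kappa r u y.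
Proof.
  intros Hx Hxy Hy. pose proof PI_RGT_0.
  assert (Hslope : forall t, x <= t <= y ->
    0 < 2 * r t * (sin t - cos t * segment_ratio t) * (r t / sin t - / (kappa * u t))).
  { intros t Ht. pose proof (sin_gt_0 t ltac:(lra) ltac:(lra)).
    pose proof (profile_u_pos t ltac:(lra)).
    pose proof (profile_r_gt t ltac:(lra)) as Hrt.
    assert (0 < sin t / (kappa * u t)) by (apply Rdiv_lt_0_compat; nra).
    assert (E : r t / sin t - / (kappa * u t) = (r t - sin t / (kappa * u t)) / sin t)
      by (field; lra).
    rewrite E. pose proof (segment_ratio_slope_pos t ltac:(lra)).
    apply Rmult_lt_0_compat; [apply Rmult_lt_0_compat; lra |].
    apply Rdiv_lt_0_compat; lra. }
  apply (derive_pos_interior_lt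
           (fun t => r t ^ 2 * segment_ratio t - channel_volume kappa r u t)
           (fun t => 2 * r t * (sin t - cos t * segment_ratio t)
                     * (r t / sin t - / (kappa * u t)))); [lra | | |].
  - intros t Ht. pose proof (sin_gt_0 t ltac:(lra) ltac:(lra)).
    pose proof (profile_u_pos t ltac:(lra)).
    pose proof (profile_derive_r t ltac:(lra)) as Hr.
    pose proof (is_derive_segment_ratio t ltac:(lra)) as Hphi.
    pose proof (is_derive_channel_volume t ltac:(lra)) as HV.
    auto_derive.
    + repeat split; [eexists; exact Hr | eexists; exact Hphi | eexists; exact HV].
    + rewrite_Derive Hr. rewrite_Derive Hphi. rewrite_Derive HV. field. lra.
  - intros t Ht. apply Rlt_le, Hslope. lra.
  - intros t Ht. apply Hslope. lra.
Qed.

Lemma channel_volume_lt_segment g : 0 < g <= PI / 2 ->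
  channel_volume kappa r u g < r g ^ 2 / sin g ^ 2 * (g - sin g * cos g).
Proof.
  intros Hg. pose proof PI_RGT_0.
  enough (0 < r g ^ 2 * segment_ratio g - channel_volume kappa r u g)
    by (unfold segment_ratio, Rdiv in *; lra).
  apply (increasing_pos_of_vanishing_lower_bound
           (fun t => r t ^ 2 * segment_ratio t - channel_volume kappa r u t)
           (channel_volume kappa r u) (PI / 2));
    [| exact channel_volume_0 | exact segment_excess_increasing | | exact Hg].
  - apply (is_derive_continuity_pt _ _ _ (is_derive_channel_volume 0 ltac:(lra))).
  - intros t Ht. pose proof (segment_ratio_nonneg t ltac:(lra)).
    assert (0 <= r t ^ 2 * segment_ratio t) by (apply Rmult_le_pos; [nra | lra]).
    lra.
Qed.

Local Notation rad := (r (PI / 2)).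
Local Notation uc := (u (PI / 2)).

Lemma profile_inv_u_lt_rad p : PI / 2 <= p <= PI -> / (kappa * u p) < rad.
Proof.
  intros Hp. pose proof PI_RGT_0.
  pose proof (profile_r_gt (PI / 2) ltac:(lra)) as Hrad.
  rewrite sin_PI2, Rdiv_1_l in Hrad.
  pose proof (profile_u_pos (PI / 2) ltac:(lra)).
  pose proof (profile_u_le (PI / 2) p ltac:(lra) ltac:(lra) ltac:(lra)).
  enough (/ (kappa * u p) <= / (kappa * uc)) by lra.
  apply Rinv_le_contravar; nra.
Qed.

Lemma profile_r_ge_rad_sin p : PI / 2 <= p <= PI -> rad * sin p <= r p.
Proof.
  intros Hp. pose proof PI_RGT_0.
  enough (r (PI / 2) - rad * sin (PI / 2) <= r p - rad * sin p)
    by (rewrite sin_PI2 in *; lra).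
  apply (derive_nonneg_le (fun t => r t - rad * sin t)
           (fun t => cos t * (/ (kappa * u t) - rad))); [lra | |].
  - intros t Ht. pose proof (profile_derive_r t ltac:(lra)) as Hr.
    pose proof (profile_u_pos t ltac:(lra)).
    auto_derive; [eexists; exact Hr |].
    rewrite_Derive Hr. field. lra.
  - intros t Ht. pose proof (cos_le_0 t ltac:(lra) ltac:(lra)).
    pose proof (profile_inv_u_lt_rad t ltac:(lra)). nra.
Qed.

Lemma profile_u_le_circle p : PI / 2 <= p <= PI -> u p - uc <= - (rad * cos p).
Proof.
  intros Hp. pose proof PI_RGT_0.
  enough (u p + rad * cos p <= u (PI / 2) + rad * cos (PI / 2))
    by (rewrite cos_PI2 in *; lra).
  apply (derive_nonpos_ge (fun t => u t + rad * cos t)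
           (fun t => sin t * (/ (kappa * u t) - rad))); [lra | |].
  - intros t Ht. pose proof (profile_derive_u t ltac:(lra)) as Hu.
    pose proof (profile_u_pos t ltac:(lra)).
    auto_derive; [eexists; exact Hu |].
    rewrite_Derive Hu. field. lra.
  - intros t Ht. pose proof (sin_ge_0 t ltac:(lra) ltac:(lra)).
    pose proof (profile_inv_u_lt_rad t ltac:(lra)). nra.
Qed.

Lemma profile_in_disc p : PI / 2 <= p <= PI -> r p ^ 2 + (u p - uc) ^ 2 <= rad ^ 2.
Proof.
  intros Hp. pose proof PI_RGT_0.
  enough (r p ^ 2 + (u p - uc) ^ 2 <= r (PI / 2) ^ 2 + (u (PI / 2) - uc) ^ 2) by lra.
  apply (derive_nonpos_ge (fun t => r t ^ 2 + (u t - uc) ^ 2)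
           (fun t => 2 / (kappa * u t) * (r t * cos t + (u t - uc) * sin t))); [lra | |].
  - intros t Ht. pose proof (profile_derive_r t ltac:(lra)) as Hr.
    pose proof (profile_derive_u t ltac:(lra)) as Hu.
    pose proof (profile_u_pos t ltac:(lra)).
    auto_derive; [repeat split; [eexists; exact Hr | eexists; exact Hu] |].
    rewrite_Derive Hr. rewrite_Derive Hu. field. lra.
  - intros t Ht. pose proof (profile_u_pos t ltac:(lra)).
    pose proof (sin_ge_0 t ltac:(lra) ltac:(lra)).
    pose proof (cos_le_0 t ltac:(lra) ltac:(lra)).
    pose proof (profile_r_ge_rad_sin t ltac:(lra)).
    pose proof (profile_u_le_circle t ltac:(lra)).
    assert (r t * cos t + (u t - uc) * sin t <= 0) by nra.
    assert (0 < 2 / (kappa * u t)) by (apply Rdiv_lt_0_compat; nra).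
    nra.
Qed.

Lemma channel_volume_sub_slab_le g : PI / 2 <= g <= PI ->
  channel_volume kappa r u g - disc_slab_area rad (u g - uc)
  <= channel_volume kappa r u (PI / 2).
Proof.
  intros Hg. pose proof PI_RGT_0.
  enough (channel_volume kappa r u g - disc_slab_area rad (u g - uc)
          <= channel_volume kappa r u (PI / 2) - disc_slab_area rad (uc - uc))
    by (rewrite Rminus_eq_0, disc_slab_area_0 in *; lra).
  apply (derive_nonpos_ge (fun t => channel_volume kappa r u t - disc_slab_area rad (u t - uc))
           (fun t => 2 * (sin t / (kappa * u t)) * (r t - sqrt (rad ^ 2 - (u t - uc) ^ 2))));
    [lra | |].
  - intros t Ht. pose proof (profile_derive_u t ltac:(lra)) as Hu.
    pose proof (is_derive_channel_volume t ltac:(lra)) as HV.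
    pose proof (is_derive_disc_slab_area rad (u t - uc)) as Hslab.
    pose proof (profile_u_pos t ltac:(lra)).
    auto_derive.
    + repeat split; [eexists; exact HV | eexists; exact Hslab | eexists; exact Hu].
    + change (u t + - uc) with (u t - uc).
      rewrite_Derive HV. rewrite_Derive Hslab. rewrite_Derive Hu. field. lra.
  - intros t Ht. pose proof (profile_u_pos t ltac:(lra)).
    pose proof (sin_ge_0 t ltac:(lra) ltac:(lra)).
    pose proof (profile_r_ge_rad_sin t ltac:(lra)).
    pose proof (profile_inv_u_lt_rad t ltac:(lra)).
    assert (0 <= sin t / (kappa * u t)) by (apply Rdiv_le_0_compat; nra).
    assert (r t <= sqrt (rad ^ 2 - (u t - uc) ^ 2)).
    { pose proof (profile_in_disc t ltac:(lra)).
      rewrite <- (sqrt_pow2 (r t)) by nra. apply sqrt_le_1; nra. }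
    nra.
Qed.

Lemma channel_volume_lt_rad g : PI / 2 <= g <= PI ->
  channel_volume kappa r u g < rad ^ 2 * (g - sin g * cos g).
Proof.
  intros Hg. pose proof PI_RGT_0.
  assert (Hrad : 0 <= rad).
  { pose proof (profile_inv_u_lt_rad (PI / 2) ltac:(lra)).
    pose proof (profile_u_pos (PI / 2) ltac:(lra)).
    assert (0 < / (kappa * uc)) by (apply Rinv_0_lt_compat; nra).
    lra. }
  pose proof (channel_volume_sub_slab_le g Hg) as Hdecr.
  pose proof (disc_slab_area_le rad _ _ (profile_u_le_circle g Hg)) as Hslab.
  rewrite disc_slab_area_neg_cos in Hslab by lra.
  pose proof (channel_volume_lt_segment (PI / 2) ltac:(lra)) as Htop.
  rewrite sin_PI2, cos_PI2, pow1, Rdiv_1_r, Rmult_0_r, Rminus_0_r in Htop.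
  lra.
Qed.

End Profile.

Theorem mainTheorem13 (kappa u0 : R) (r u : R -> R) :
  0 < kappa -> 0 < u0 -> is_profile kappa u0 r u ->
  (forall gamma, 0 < gamma <= PI / 2 ->
     channel_volume kappa r u gamma
       < (r gamma) ^ 2 / (sin gamma) ^ 2 * (gamma - sin gamma * cos gamma)) /\
  (forall gamma, PI / 2 <= gamma <= PI ->
     channel_volume kappa r u gamma
       < (r (PI / 2)) ^ 2 * (gamma - sin gamma * cos gamma)).
Proof.
  intros Hkappa Hu0 Hprofile. split.
  - exact (channel_volume_lt_segment kappa u0 r u Hkappa Hu0 Hprofile).
  - exact (channel_volume_lt_rad kappa u0 r u Hkappa Hu0 Hprofile).
Qed.
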